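(* Let $\tilde M=G/K$ be an irreducible Riemannian symmetric space with Cartan decomposition $\mathfrak g=\mathfrak k\oplus\mathfrak p$, and let $\mathfrak a\subset\mathfrak p$ be a maximal abelian subspace with restricted root system $\Delta\subset\mathfrak a$. \begin{enumerate} \item[(a)] If $\beta,\gamma\in\Delta$ are neither proportional nor orthogonal, then $\tilde R(A,X_\beta)X_\gamma\neq0$ for all nonzero $X_\beta\in\mathfrak p_\beta$, $X_\gamma\in\mathfrak p_\gamma$ and all $A\in\mathfrak a$ with $\langle\beta,A\rangle\neq0$. \item[(b)] If $X,Y\in\mathfrak p$ satisfy $\tilde R(X,Z,W,Y)=0$ for all $Z,W\in\mathfrak p$, then $X=0$ or $Y=0$. \end{enumerate}
   Context: $\varepsilon=\pm1$ is the sign of the Einstein constant of $\tilde M$, $B$ is the Killing form of $\mathfrak g$, and $\mathfrak p\cong T_o\tilde M$ carries the inner product $\langle X,Y\rangle=-\varepsilon B(X,Y)$. The curvature is $\tilde R(X,Y)Z=-[[X,Y],Z]$ and $\tilde R(X,Y,Z,W)=\langle\tilde R(X,Y)Z,W\rangle$. For $\beta\in\mathfrak a$, $\mathfrak g_\beta=\{X\in\mathfrak g:[A,[A,X]]=-\varepsilon\langle\beta,A\rangle^2X\ \forall A\in\mathfrak a\}$; a restricted root is a nonzero $\beta\in\mathfrak a$ with $\mathfrak g_\beta\neq0$, and $\mathfrak p_\beta=\mathfrak g_\beta\cap\mathfrak p$ is its root space. *)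

(* A real Lie algebra g is modelled as R^n = 'rV[R]_n with a
   bracket br; the symmetric pair is given by an involutive automorphism theta. *)
From HB Require Import structures.
From mathcomp Require Import all_boot all_order all_algebra.
From mathcomp Require Import reals.
Set Implicit Arguments. Unset Strict Implicit. Unset Printing Implicit Defensive.
Import Order.TTheory GRing.Theory Num.Theory.
Local Open Scope ring_scope.

Section SymDefs.
Variables (R : realType) (n : nat).
Local Notation V := 'rV[R]_n.

Definition lie_bracket (br : V -> V -> V) : Prop :=
  [/\ forall (c : R) x y z, br (c *: x + y) z = c *: br x z + br y z,
      forall (c : R) x y z, br z (c *: x + y) = c *: br z x + br z y,
      forall x, br x x = 0
    & forall x y z, br x (br y z) + br y (br z x) + br z (br x y) = 0].

Definition ad (br : V -> V -> V) (X : V) : 'M[R]_n := lin1_mx (br X).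
Definition killing (br : V -> V -> V) (X Y : V) : R := \tr (ad br X *m ad br Y).

(* semisimple (Helgason's definition): nondegenerate Killing form *)
Definition semisimple (br : V -> V -> V) : Prop :=
  forall X, (forall Y, killing br X Y = 0) -> X = 0.

Definition involutive_aut (br : V -> V -> V) (theta : V -> V) : Prop :=
  [/\ forall (c : R) x y, theta (c *: x + y) = c *: theta x + theta y,
      forall x y, theta (br x y) = br (theta x) (theta y)
    & forall x, theta (theta x) = x].

Definition kpart (theta : V -> V) (X : V) : Prop := theta X = X.
Definition ppart (theta : V -> V) (X : V) : Prop := theta X = - X.

Definition inner (br : V -> V -> V) (eps : R) (X Y : V) : R := - eps * killing br X Y.

(* Irreducible Riemannian symmetric space G/K of compact (eps = 1) or
   noncompact (eps = -1) type, given by the orthogonal symmetric Lie algebra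
   (g, theta): g semisimple, k compactly embedded (B negative definite on k),
   <.,.> = -eps B positive definite on p, k contains no nonzero ideal of g,
   and ad(k) acts irreducibly on p. *)
Definition irreducible_symmetric (br : V -> V -> V) (theta : V -> V) (eps : R) : Prop :=
  [/\ lie_bracket br, semisimple br, involutive_aut br theta
    & eps = 1 \/ eps = -1] /\
  [/\ forall X, kpart theta X -> X != 0 -> killing br X X < 0,
      forall X, ppart theta X -> X != 0 -> 0 < inner br eps X X,
      forall I : {vspace V},
        (forall X, X \in I -> kpart theta X) ->
        (forall X Y, X \in I -> br Y X \in I) -> I = 0%VS
    & forall W : {vspace V},
        (forall X, X \in W -> ppart theta X) ->
        (forall K X, kpart theta K -> X \in W -> br K X \in W) ->
        W = 0%VS \/ (forall X, ppart theta X -> X \in W)].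

Definition abelian_sub (br : V -> V -> V) (theta : V -> V) (a : {vspace V}) : Prop :=
  (forall A, A \in a -> ppart theta A) /\
  (forall A B, A \in a -> B \in a -> br A B = 0).

Definition max_abelian (br : V -> V -> V) (theta : V -> V) (a : {vspace V}) : Prop :=
  abelian_sub br theta a /\
  (forall b : {vspace V}, abelian_sub br theta b -> (a <= b)%VS -> b = a).

Definition in_gbeta (br : V -> V -> V) (eps : R) (a : {vspace V}) (beta X : V) : Prop :=
  forall A, A \in a -> br A (br A X) = (- eps * (inner br eps beta A) ^+ 2) *: X.

Definition in_pbeta (br : V -> V -> V) (theta : V -> V) (eps : R) (a : {vspace V})
  (beta X : V) : Prop := ppart theta X /\ in_gbeta br eps a beta X.

Definition restricted_root (br : V -> V -> V) (eps : R) (a : {vspace V}) (beta : V) : Prop :=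
  [/\ beta \in a, beta != 0 & exists X, X != 0 /\ in_gbeta br eps a beta X].

Definition curv (br : V -> V -> V) (X Y Z : V) : V := - br (br X Y) Z.
Definition curv4 (br : V -> V -> V) (eps : R) (X Y Z W : V) : R :=
  inner br eps (curv br X Y Z) W.

Definition proportional (beta gamma : V) : Prop := exists c : R, beta = c *: gamma.

End SymDefs.

(** For (b): since the Killing form is definite on [k] and on [p], the
    vanishing of [R(X, Z, W, Y)] on [p] forces [ad X ad Y] and [ad Y ad X] to
    vanish on [p], hence on all of [g].  The elements [X'] of [p] with
    [ad X' ad Y = ad Y ad X' = 0] form an [ad k]-invariant subspace of [p]
    containing [X]; by irreducibility it is [0] or [p].  In the second case
    [ad Y ^ 2 = 0], so [ad Y = 0] and [Y = 0].

    For (a), pick [A1] in [a] orthogonal to [beta] but not to [gamma], and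
    assume [[[A, X_beta], X_gamma] = 0].  Bracketing with [A1] and [A] gives
    [[X_beta, X_gamma] = 0] and then [[X_beta, H] = 0] for
    [H = [X_gamma, [A1, X_gamma]]].  But [H] lies in [p] and commutes with [a],
    so by maximality [H] is in [a]; and [<beta, H>] is a nonzero multiple of
    the Killing norm of [[A1, X_gamma]] in [k], so [ad H] does not kill
    [X_beta]. *)

From HB Require Import structures.
From mathcomp Require Import all_boot all_order all_algebra.
From mathcomp Require Import reals.
Import Order.TTheory GRing.Theory Num.Theory.
Local Open Scope ring_scope.
Set Implicit Arguments. Unset Strict Implicit.

Lemma rV_mulmx_ext (R : nzRingType) (n : nat) (M N : 'M[R]_n) :
  (forall u : 'rV_n, u *m M = u *m N) -> M = N.
Proof. by move=> h; apply/row_matrixP => i; rewrite !rowE h. Qed.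

Lemma linear_kernel_vspace (R : fieldType) (U W : vectType R) (f : U -> W) :
  linear f -> exists K : {vspace U}, forall u, u \in K <-> f u = 0.
Proof.
move=> lin_f.
pose fL : {linear U -> W} := HB.pack f (GRing.isLinear.Build _ _ _ _ f lin_f).
by exists (lker (linfun fL)) => u; rewrite memv_ker lfunE; split => /eqP.
Qed.

Section SymmetricSpace.
Variables (R : realType) (n : nat) (br : 'rV[R]_n -> 'rV[R]_n -> 'rV[R]_n).
Local Notation V := 'rV[R]_n.
Hypothesis Hbr : lie_bracket br.

Lemma brDl x y z : br (x + y) z = br x z + br y z.
Proof. by case: Hbr => h _ _ _; have := h 1 x y z; rewrite !scale1r. Qed.

Lemma brDr x y z : br z (x + y) = br z x + br z y.
Proof. by case: Hbr => _ h _ _; have := h 1 x y z; rewrite !scale1r. Qed.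

Lemma br0l z : br 0 z = 0.
Proof. by apply: (@addrI _ (br 0 z)); rewrite -brDl !addr0. Qed.

Lemma br0r z : br z 0 = 0.
Proof. by apply: (@addrI _ (br z 0)); rewrite -brDr !addr0. Qed.

Lemma brZl c x z : br (c *: x) z = c *: br x z.
Proof. by case: Hbr => h _ _ _; have := h c x 0 z; rewrite !addr0 br0l addr0. Qed.

Lemma brZr c x z : br z (c *: x) = c *: br z x.
Proof. by case: Hbr => _ h _ _; have := h c x 0 z; rewrite !addr0 br0r addr0. Qed.

Lemma brNl x z : br (- x) z = - br x z.
Proof. by rewrite -scaleN1r brZl scaleN1r. Qed.

Lemma brNr x z : br z (- x) = - br z x.
Proof. by rewrite -scaleN1r brZr scaleN1r. Qed.

Lemma brBl x y z : br (x - y) z = br x z - br y z.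
Proof. by rewrite brDl brNl. Qed.

Lemma brxx x : br x x = 0.
Proof. by case: Hbr. Qed.

Lemma brC x y : br x y = - br y x.
Proof.
apply/eqP; rewrite -addr_eq0; apply/eqP.
by have := brxx (x + y); rewrite brDl !brDr !brxx add0r addr0.
Qed.

Lemma br_jacobi x y z : br x (br y z) = br (br x y) z + br y (br x z).
Proof.
case: Hbr => _ _ _ /(_ x y z) /eqP; rewrite -addrA addr_eq0 => /eqP ->.
rewrite opprD (brC z (br x y)) opprK (brC z x) brNr opprK addrC.
by rewrite (brC (br x y)) ?opprK; rewrite -brC.
Qed.

Lemma mul_ad X u : u *m ad br X = br X u.
Proof.
have lin : linear (br X) by move=> c x y; case: Hbr => _ h _ _; exact: h.
exact: (mul_rV_lin1 (HB.pack (br X) (GRing.isLinear.Build _ _ _ _ (br X) lin))).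
Qed.

Lemma adDZ c X Y : ad br (c *: X + Y) = c *: ad br X + ad br Y.
Proof. by apply: rV_mulmx_ext => u; rewrite mulmxDr -scalemxAr !mul_ad brDl brZl. Qed.

Lemma ad_br x y : ad br (br x y) = ad br y *m ad br x - ad br x *m ad br y.
Proof.
by apply: rV_mulmx_ext => u; rewrite mulmxBr !mulmxA !mul_ad br_jacobi addrK.
Qed.

Lemma ad_mul_eq0 X Y : ad br X *m ad br Y = 0 <-> forall U, br Y (br X U) = 0.
Proof.
split=> [h U | h]; first by rewrite -!mul_ad -mulmxA h mulmx0.
by apply: rV_mulmx_ext => u; rewrite mulmxA !mul_ad h mulmx0.
Qed.

Lemma killingC x y : killing br x y = killing br y x.
Proof. exact: mxtrace_mulC. Qed.

Lemma killingDZl c x y z :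
  killing br (c *: x + y) z = c * killing br x z + killing br y z.
Proof. by rewrite /killing adDZ mulmxDl -scalemxAl mxtraceD mxtraceZ. Qed.

Lemma killingZl c x z : killing br (c *: x) z = c * killing br x z.
Proof.
have ad0 : ad br 0 = 0 by apply: rV_mulmx_ext => u; rewrite mul_ad br0l mulmx0.
by rewrite -[_ *: x]addr0 killingDZl /killing ad0 mul0mx mxtrace0 addr0.
Qed.

Lemma killing0r z : killing br z 0 = 0.
Proof. by rewrite killingC -(scale0r 0) killingZl mul0r. Qed.

Lemma killingNl x z : killing br (- x) z = - killing br x z.
Proof. by rewrite -[- x]scaleN1r killingZl mulN1r. Qed.

Lemma killingNr x z : killing br z (- x) = - killing br z x.
Proof. by rewrite !(killingC z) killingNl. Qed.

Lemma killing_br x y z : killing br (br x y) z = killing br x (br y z).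
Proof.
rewrite /killing !ad_br mulmxBl mulmxBr !raddfB /= -!mulmxA.
by congr (_ - _); rewrite mxtrace_mulC -mulmxA.
Qed.

Lemma killing_brC x y z : killing br (br x y) z = - killing br y (br x z).
Proof. by rewrite brC killingNl killing_br. Qed.

Lemma innerC eps x y : inner br eps x y = inner br eps y x.
Proof. by rewrite /inner killingC. Qed.

Lemma innerZr eps c x z : inner br eps z (c *: x) = c * inner br eps z x.
Proof. by rewrite !(innerC _ z) /inner killingZl mulrCA. Qed.

Lemma innerBr eps x y z :
  inner br eps z (x - y) = inner br eps z x - inner br eps z y.
Proof.
rewrite !(innerC _ z) /inner addrC -[- y]scaleN1r killingDZl.
by rewrite mulN1r mulrDr mulrN addrC.
Qed.

Section CartanDecomposition.
Variable theta : V -> V.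
Hypothesis Hth : involutive_aut br theta.

Lemma thetaD x y : theta (x + y) = theta x + theta y.
Proof. by case: Hth => h _ _; have := h 1 x y; rewrite !scale1r. Qed.

Lemma theta0 : theta 0 = 0.
Proof. by apply: (@addrI _ (theta 0)); rewrite -thetaD !addr0. Qed.

Lemma thetaZ c x : theta (c *: x) = c *: theta x.
Proof. by case: Hth => h _ _; have := h c x 0; rewrite !addr0 theta0 addr0. Qed.

Lemma thetaN x : theta (- x) = - theta x.
Proof. by rewrite -scaleN1r thetaZ scaleN1r. Qed.

Lemma theta_br x y : theta (br x y) = br (theta x) (theta y).
Proof. by case: Hth. Qed.

Lemma thetaK x : theta (theta x) = x.
Proof. by case: Hth. Qed.

Lemma ppartD x y : ppart theta x -> ppart theta y -> ppart theta (x + y).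
Proof. by rewrite /ppart thetaD => -> ->; rewrite opprD. Qed.

Lemma ppartZ c x : ppart theta x -> ppart theta (c *: x).
Proof. by rewrite /ppart thetaZ => ->; rewrite scalerN. Qed.

Lemma ppartN x : ppart theta x -> ppart theta (- x).
Proof. by rewrite /ppart thetaN => ->. Qed.

Lemma br_pp x y : ppart theta x -> ppart theta y -> kpart theta (br x y).
Proof. by rewrite /kpart theta_br => -> ->; rewrite brNl brNr opprK. Qed.

Lemma br_pk x y : ppart theta x -> kpart theta y -> ppart theta (br x y).
Proof. by rewrite /ppart theta_br => -> ->; rewrite brNl. Qed.

Lemma br_kp x y : kpart theta x -> ppart theta y -> ppart theta (br x y).
Proof. by rewrite /ppart theta_br => -> ->; rewrite brNr. Qed.

Lemma kpart_ppart_eq0 x : kpart theta x -> ppart theta x -> x = 0.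
Proof.
rewrite /kpart /ppart => -> /eqP; rewrite -addr_eq0 -mulr2n -scaler_nat.
by rewrite scaler_eq0 pnatr_eq0 /= => /eqP.
Qed.

Lemma cartan_decomposition U :
  exists Uk Up, [/\ kpart theta Uk, ppart theta Up & U = Uk + Up].
Proof.
exists (2^-1 *: (U + theta U)), (2^-1 *: (U - theta U)); split.
- by rewrite /kpart thetaZ thetaD thetaK addrC.
- by rewrite /ppart thetaZ thetaD thetaN thetaK -scalerN opprB addrC.
- rewrite -scalerDr addrACA subrr addr0 -mulr2n -scaler_nat scalerA.
  by rewrite mulVf ?scale1r // pnatr_eq0.
Qed.

Section Definiteness.
Variable eps : R.
Hypothesis eps_neq0 : eps != 0.
Hypothesis Hk : forall X, kpart theta X -> X != 0 -> killing br X X < 0.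
Hypothesis Hp : forall X, ppart theta X -> X != 0 -> 0 < inner br eps X X.

Lemma ppart_killing_eq0 v : ppart theta v -> killing br v v = 0 -> v = 0.
Proof.
move=> pv kv; case: (eqVneq v 0) => // nz.
by have := Hp pv nz; rewrite /inner kv mulr0 ltxx.
Qed.

Lemma kpart_killing_eq0 v : kpart theta v -> killing br v v = 0 -> v = 0.
Proof.
move=> kv h; case: (eqVneq v 0) => // nz.
by have := Hk kv nz; rewrite h ltxx.
Qed.

(* [ad X] swaps [k] and [p] and is skew for the Killing form, so for each
   component [M'] of [M] we get [B([X, M'], [X, M']) = - B(M', [X, [X, M']]) = 0],
   and [B] is definite on the component containing [[X, M']]. *)
Lemma ppart_ad_sq_eq0 X M :
  ppart theta X -> br X (br X M) = 0 -> br X M = 0.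
Proof.
move=> pX; have [Mk [Mp [kM pM ->]]] := cartan_decomposition M.
rewrite !brDr => /eqP; rewrite addr_eq0 => /eqP sq.
have kMk : kpart theta (br X (br X Mk)) by apply: br_pp => //; apply: br_pk.
have sqk : br X (br X Mk) = 0.
  by apply: (kpart_ppart_eq0 kMk); rewrite sq; apply/ppartN/br_pk/br_pp.
have sqp : br X (br X Mp) = 0 by apply: oppr_inj; rewrite -sq sqk oppr0.
have -> : br X Mk = 0.
  by apply: (ppart_killing_eq0 (br_pk pX kM)); rewrite killing_brC sqk killing0r oppr0.
have -> : br X Mp = 0.
  by apply: (kpart_killing_eq0 (br_pp pX pM)); rewrite killing_brC sqp killing0r oppr0.
by rewrite addr0.
Qed.

Section Nondegeneracy.

Lemma ad_ppart_mul_eq0 X Y : ppart theta X -> ppart theta Y ->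
  (forall Z, ppart theta Z -> br Y (br X Z) = 0) ->
  (forall Z, ppart theta Z -> br X (br Y Z) = 0) ->
  forall U, br X (br Y U) = 0 /\ br Y (br X U) = 0.
Proof.
move=> pX pY hYX hXY.
have XY0 : br X Y = 0.
  by apply: (kpart_killing_eq0 (br_pp pX pY)); rewrite killing_br hYX // killing0r.
have comm W : br Y (br X W) = br X (br Y W).
  by rewrite br_jacobi (brC Y) XY0 oppr0 br0l add0r.
have on_k K : kpart theta K -> br X (br Y K) = 0.
  move=> kK; apply: (kpart_killing_eq0 (br_pp pX (br_pk pY kK))).
  by rewrite !killing_brC comm hYX ?br0r ?killing0r ?oppr0 //; exact: br_pk.
move=> U; have [Uk [Up [kU pU ->]]] := cartan_decomposition U.
have e : br X (br Y (Uk + Up)) = 0 by rewrite !brDr on_k // hXY // addr0.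
by rewrite comm.
Qed.

Lemma br_ad_images_eq0 X Y : ppart theta X ->
  (forall U, br X (br Y U) = 0) -> (forall U, br Y (br X U) = 0) ->
  forall U W, br (br X U) (br Y W) = 0.
Proof.
move=> pX hXY hYX U W.
have eY : br Y (br (br X U) W) = br (br X U) (br Y W).
  by rewrite br_jacobi hYX br0l add0r.
have eX : br X (- br (br Y W) U) = br (br X U) (br Y W).
  by rewrite brNr br_jacobi hXY br0l add0r brC opprK.
by rewrite -eX; apply: ppart_ad_sq_eq0 => //; rewrite eX -eY hXY.
Qed.

Lemma ad_annihilator_vspace Y : exists N : {vspace V}, forall v, v \in N <->
  [/\ ppart theta v, forall U, br v (br Y U) = 0 & forall U, br Y (br v U) = 0].
Proof.
have lin0 : linear (fun v => theta v + v).
  by move=> c x y; rewrite thetaD thetaZ scalerDr addrACA.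
have lin1 : linear (fun v => ad br Y *m ad br v).
  by move=> c x y; rewrite adDZ mulmxDr scalemxAr.
have lin2 : linear (fun v => ad br v *m ad br Y).
  by move=> c x y; rewrite adDZ mulmxDl scalemxAl.
have [N0 h0] := linear_kernel_vspace lin0.
have [N1 h1] := linear_kernel_vspace lin1.
have [N2 h2] := linear_kernel_vspace lin2.
exists (N0 :&: N1 :&: N2)%VS => v; rewrite !memv_cap /ppart.
split=> [/andP[/andP[/h0/eqP + /h1/ad_mul_eq0 ?] /h2/ad_mul_eq0 ?] | [+ e1 e2]].
  by rewrite addr_eq0 => /eqP.
move=> /eqP; rewrite -addr_eq0 => /eqP/h0 ->.
by rewrite (h1 v).2 ?(h2 v).2 //; apply/ad_mul_eq0.
Qed.

Hypothesis Hirr : forall W : {vspace V},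
  (forall X, X \in W -> ppart theta X) ->
  (forall K X, kpart theta K -> X \in W -> br K X \in W) ->
  W = 0%VS \/ (forall X, ppart theta X -> X \in W).

Lemma curv4_nondegenerate X Y : ppart theta X -> ppart theta Y ->
  (forall Z W, ppart theta Z -> ppart theta W -> curv4 br eps X Z W Y = 0) ->
  X = 0 \/ Y = 0.
Proof.
move=> pX pY hR.
have hB Z W : ppart theta Z -> ppart theta W -> killing br (br (br X Z) W) Y = 0.
  move=> pZ pW; move: (hR Z W pZ pW).
  rewrite /curv4 /inner /curv killingNl mulrN mulNr opprK => /eqP.
  by rewrite mulf_eq0 (negbTE eps_neq0) => /eqP.
have hYX Z : ppart theta Z -> br Y (br X Z) = 0.
  move=> pZ; have pV : ppart theta (br (br X Z) Y) by apply/br_kp/pY/br_pp.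
  apply: oppr_inj; rewrite oppr0 -brC; apply: (ppart_killing_eq0 pV).
  by rewrite {1}killing_br (brC Y) killingNr -killing_br hB // oppr0.
have hXY Z : ppart theta Z -> br X (br Y Z) = 0.
  move=> pZ; have pV : ppart theta (br (br Y Z) X) by apply/br_kp/pX/br_pp.
  apply: oppr_inj; rewrite oppr0 -brC; apply: (ppart_killing_eq0 pV).
  by rewrite {1}killing_br killingC {2}(brC Y Z) killingNr -killing_br hB ?oppr0.
have [N hN] := ad_annihilator_vspace Y.
have N_p v : v \in N -> ppart theta v by move=> /hN [].
have N_k K v : kpart theta K -> v \in N -> br K v \in N.
  move=> kK /hN [pv h1 h2]; apply/hN; split; first exact: br_kp.
    by move=> U; rewrite (brC K v) brNl br_ad_images_eq0 ?oppr0.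
  move=> U; rewrite br_jacobi (brC K) brNr h2 oppr0 br0l add0r.
  by rewrite brNl br_ad_images_eq0 ?oppr0.
have XN : X \in N.
  by apply/hN; split=> // U; case: (ad_ppart_mul_eq0 pX pY hYX hXY U).
case: (Hirr N_p N_k) => [N0 | Np].
  by left; apply/eqP; rewrite -memv0 -N0.
right; have /hN [_ _ YY] := Np _ pY.
have adY : ad br Y = 0.
  by apply: rV_mulmx_ext => u; rewrite mul_ad mulmx0; apply: ppart_ad_sq_eq0.
by apply: ppart_killing_eq0 => //; rewrite /killing adY mulmx0 mxtrace0.
Qed.

End Nondegeneracy.

Section RootVectors.
Variable a : {vspace V}.
Hypothesis Ha : max_abelian br theta a.
Local Notation ip := (inner br eps).

Lemma max_abelian_ppart A : A \in a -> ppart theta A.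
Proof. by case: Ha => [[h _] _]; exact: h. Qed.

Lemma max_abelian_br A B : A \in a -> B \in a -> br A B = 0.
Proof. by case: Ha => [[_ h] _]; exact: h. Qed.

Lemma max_abelian_centralizer H : ppart theta H ->
  (forall A, A \in a -> br A H = 0) -> H \in a.
Proof.
move=> pH cH; have ab : abelian_sub br theta (a + <[H]>)%VS.
  split=> [v | v1 v2].
    case/memv_addP=> u ua [w /vlineP [k ->] ->].
    by apply: ppartD; [exact: max_abelian_ppart | exact: ppartZ].
  case/memv_addP=> u1 u1a [w1 /vlineP [k1 ->] ->].
  case/memv_addP=> u2 u2a [w2 /vlineP [k2 ->] ->].
  rewrite !brDl !brDr !brZl !brZr brxx (max_abelian_br u1a u2a) (brC H u2) !cH //.
  by rewrite !scaler0 oppr0 !scaler0 !addr0.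
case: Ha => _ /(_ _ ab (addvSl _ _)) <-.
exact: subvP (addvSr _ _) _ (memv_line H).
Qed.

Lemma eps_sq_neq0 b : b != 0 -> - eps * b ^+ 2 != 0.
Proof. by move=> nz; rewrite mulf_neq0 ?oppr_eq0 ?eps_neq0 // expf_neq0. Qed.

Lemma gbeta_br_eq0 d Z A :
  in_gbeta br eps a d Z -> A \in a -> ip d A = 0 -> br A Z = 0.
Proof.
move=> hZ hA dA; apply: ppart_ad_sq_eq0; first exact: max_abelian_ppart.
by rewrite hZ // dA expr0n /= mulr0 scale0r.
Qed.

Lemma gbeta_br_neq0 d Z A : in_gbeta br eps a d Z -> Z != 0 ->
  A \in a -> ip d A != 0 -> br A Z != 0.
Proof.
move=> hZ nZ hA dA; apply: contra_neq nZ => AZ0.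
move: (hZ A hA); rewrite AZ0 br0r => /esym/eqP.
by rewrite scaler_eq0 (negbTE (eps_sq_neq0 dA)) => /eqP.
Qed.

Lemma gbeta_br_proportional d Z A0 A : in_gbeta br eps a d Z ->
  A0 \in a -> ip d A0 != 0 -> A \in a -> br A Z = (ip d A / ip d A0) *: br A0 Z.
Proof.
move=> hZ hA0 dA0 hA; set s := ip d A / ip d A0.
have hAs : A - s *: A0 \in a by rewrite memvB // memvZ.
have dAs : ip d (A - s *: A0) = 0 by rewrite innerBr innerZr /s divfK // subrr.
by apply/eqP; rewrite -subr_eq0 -brZl -brBl (gbeta_br_eq0 hZ hAs dAs).
Qed.

Lemma gbeta_br_centralizes gamma Z A0 A : in_gbeta br eps a gamma Z ->
  A0 \in a -> ip gamma A0 != 0 -> A \in a -> br A (br Z (br A0 Z)) = 0.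
Proof.
move=> hZ hA0 gA0 hA; set s := ip gamma A / ip gamma A0.
have AZ : br A Z = s *: br A0 Z := gbeta_br_proportional hZ hA0 gA0 hA.
have AS : br A (br A0 Z) = s *: ((- eps * ip gamma A0 ^+ 2) *: Z).
  by rewrite br_jacobi (max_abelian_br hA hA0) br0l add0r AZ brZr hZ.
by rewrite br_jacobi AZ AS brZl brxx scaler0 add0r !brZr brxx !scaler0.
Qed.

Lemma inner_gbeta_br_neq0 gamma Z A0 A : ppart theta Z ->
  in_gbeta br eps a gamma Z -> Z != 0 -> A0 \in a -> ip gamma A0 != 0 ->
  A \in a -> ip gamma A != 0 -> ip A (br Z (br A0 Z)) != 0.
Proof.
move=> pZ hZ nZ hA0 gA0 hA gA; set S := br A0 Z.
have kS : kpart theta S by apply/br_pp/pZ/max_abelian_ppart.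
have nS : S != 0 := gbeta_br_neq0 hZ nZ hA0 gA0.
rewrite /inner -killing_br (gbeta_br_proportional hZ hA0 gA0 hA) killingZl.
rewrite mulf_neq0 ?oppr_eq0 ?eps_neq0 // mulf_neq0 ?(lt_eqF (Hk kS nS)) //.
by rewrite mulf_neq0 ?invr_eq0.
Qed.

Lemma root_kernel_vector beta gamma : beta \in a -> gamma \in a ->
  ~ proportional beta gamma -> ip beta gamma != 0 ->
  exists2 A1, A1 \in a & ip beta A1 = 0 /\ ip gamma A1 != 0.
Proof.
move=> ba ga npr bg; set A1 := ip beta beta *: gamma - ip beta gamma *: beta.
have bA1 : ip beta A1 = 0 by rewrite innerBr !innerZr mulrC subrr.
exists A1; first by rewrite memvB // memvZ.
split=> //; apply/negP => /eqP gA1; apply: npr.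
have A1a : A1 \in a by rewrite memvB // memvZ.
have A10 : A1 = 0.
  case: (eqVneq A1 0) => // nz; have := Hp (max_abelian_ppart A1a) nz.
  rewrite {2}/A1 innerBr !innerZr (innerC _ A1 gamma) (innerC _ A1 beta).
  by rewrite gA1 bA1 !mulr0 subrr ltxx.
exists ((ip beta gamma)^-1 * ip beta beta).
move/eqP: A10; rewrite subr_eq0 => /eqP e.
by rewrite -scalerA e scalerA mulVf // scale1r.
Qed.

Lemma curv_root_neq0 beta gamma Xb Xg A : beta \in a -> gamma \in a ->
  ~ proportional beta gamma -> ip beta gamma != 0 ->
  in_gbeta br eps a beta Xb -> Xb != 0 ->
  ppart theta Xg -> in_gbeta br eps a gamma Xg -> Xg != 0 ->
  A \in a -> ip beta A != 0 -> curv br A Xb Xg != 0.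
Proof.
move=> ba ga npr bg gXb nXb pXg gXg nXg hA bA.
rewrite /curv oppr_eq0; apply/negP => /eqP h0.
have [A1 A1a [bA1 gA1]] := root_kernel_vector ba ga npr bg.
set Kb := br A Xb; set Sg := br A1 Xg; set H := br Xg Sg.
have A1Xb : br A1 Xb = 0 := gbeta_br_eq0 gXb A1a bA1.
have KbSg : br Kb Sg = 0.
  have : br A1 (br Kb Xg) = 0 by rewrite h0 br0r.
  rewrite br_jacobi /Kb br_jacobi (max_abelian_br A1a hA) br0l A1Xb br0r.
  by rewrite add0r br0l add0r.
have XbXg : br Xb Xg = 0.
  have : br A (br Kb Xg) = 0 by rewrite h0 br0r.
  rewrite br_jacobi {1}/Kb gXb // brZl (gbeta_br_proportional gXg A1a gA1 hA).
  rewrite -/Sg brZr KbSg scaler0 addr0.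
  by move/eqP; rewrite scaler_eq0 (negbTE (eps_sq_neq0 bA)) => /eqP.
have XbSg : br Xb Sg = 0.
  have : br A1 (br Xb Xg) = 0 by rewrite XbXg br0r.
  by rewrite br_jacobi A1Xb br0l add0r.
have HXb : br H Xb = 0 by rewrite /H brC br_jacobi XbXg XbSg br0l br0r addr0 oppr0.
have aH : H \in a.
  apply: max_abelian_centralizer => [|A2 hA2].
    exact: br_pk pXg (br_pp (max_abelian_ppart A1a) pXg).
  exact: (gbeta_br_centralizes gXg A1a gA1 hA2).
have bH : ip beta H != 0.
  by apply: (inner_gbeta_br_neq0 pXg gXg nXg A1a gA1 ba); rewrite innerC.
move: HXb; rewrite (gbeta_br_proportional gXb hA bA aH) => /eqP.
rewrite scaler_eq0 mulf_eq0 invr_eq0 (negbTE bH) (negbTE bA) /=.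
by rewrite (negbTE (gbeta_br_neq0 gXb nXb hA bA)).
Qed.

End RootVectors.
End Definiteness.
End CartanDecomposition.
End SymmetricSpace.

Unset Implicit Arguments.

Theorem lemma2p1 (R : realType) (n : nat) (br : 'rV[R]_n -> 'rV[R]_n -> 'rV[R]_n)
  (theta : 'rV[R]_n -> 'rV[R]_n) (eps : R) (a : {vspace 'rV[R]_n}) :
  irreducible_symmetric br theta eps ->
  max_abelian br theta a ->
  (forall beta gamma : 'rV[R]_n,
     restricted_root br eps a beta -> restricted_root br eps a gamma ->
     ~ proportional beta gamma -> inner br eps beta gamma != 0 ->
     forall Xb Xg A : 'rV[R]_n,
       in_pbeta br theta eps a beta Xb -> Xb != 0 ->
       in_pbeta br theta eps a gamma Xg -> Xg != 0 ->
       A \in a -> inner br eps beta A != 0 ->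
       curv br A Xb Xg != 0)
  /\
  (forall X Y : 'rV[R]_n, ppart theta X -> ppart theta Y ->
     (forall Z W : 'rV[R]_n, ppart theta Z -> ppart theta W ->
        curv4 br eps X Z W Y = 0) ->
     X = 0 \/ Y = 0).
Proof.
move=> [[Hbr _ Hth Heps] [Hk Hp _ Hirr]] Ha.
have eps_neq0 : eps != 0 by case: Heps => ->; rewrite ?oppr_eq0 oner_eq0.
split.
  move=> beta gamma [ba _ _] [ga _ _] npr bg Xb Xg A [_ gXb] nXb [pXg gXg] nXg.
  exact: (curv_root_neq0 Hbr Hth eps_neq0 Hk Hp Ha ba ga npr bg gXb nXb pXg gXg nXg).
exact: (curv4_nondegenerate Hbr Hth eps_neq0 Hk Hp Hirr).
Qed.
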